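(* Let $M$ be a compact metric space and $f:M\to M$ a homeomorphism. Then: (1) for every finite open covering $\mathcal{U}$ of $M$, $[a_{f,\mathcal{U}}(n)]\in\mathbb{B}$; (2) $o(f)\in\overline{\mathbb{B}}$.
   Context: Let $\mathcal{O}$ be the set of non-decreasing sequences $a:\mathbb{N}\to[0,\infty)$, $a\approx b$ iff $c_1a(n)\le b(n)\le c_2a(n)$ for all $n$ for some constants $0<c_1\le c_2$, $\mathbb{O}=\mathcal{O}/\!\approx$ with classes $[a(n)]$, ordered by $[a(n)]\le[b(n)]$ iff $a(n)\le Cb(n)$ for all $n$ for some $C>0$; $\overline{\mathbb{O}}$ is its Dedekind–MacNeille completion. A class $[a(n)]$ has the bounded jump property (BJP) if there is $C>0$ with $a(n+1)\le Ca(n)$ for all $n$ (independent of representative); $\mathbb{B}\subset\mathbb{O}$ is the set of such classes and $\overline{\mathbb{B}}=\{\sup(\Gamma)\in\overline{\mathbb{O}}:\Gamma\subset\mathbb{B}\text{ countable}\}$. For a finite open covering $\mathcal{U}=\{U_1,\dots,U_k\}$ of $M$, let $\mathcal{U}^n=\{U_{i_0}\cap f^{-1}(U_{i_1})\cap\cdots\cap f^{-n}(U_{i_n})\neq\emptyset: i_0,\dots,i_n\in\{1,\dots,k\}\}$ and let $a_{f,\mathcal{U}}(n)$ be the minimal cardinality of a subcovering of $\mathcal{U}^n$. The generalized entropy is $o(f)=\sup\{[g_{f,\varepsilon}(n)]:\varepsilon>0\}\in\overline{\mathbb{O}}$, where $g_{f,\varepsilon}(n)$ is the minimal cardinality of a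 finite set $G$ such that $M=\bigcup_{x\in G}\{y:\max_{0\le k\le n-1}d(f^kx,f^ky)<\varepsilon\}$; equivalently $o(f)=\sup\{[a_{f,\mathcal{U}}(n)]:\mathcal{U}\text{ a finite open covering}\}$. *)

From HB Require Import structures.
From mathcomp Require Import all_boot all_order all_algebra.
From mathcomp Require Import all_classical all_reals all_analysis.

Set Implicit Arguments.
Unset Strict Implicit.
Unset Printing Implicit Defensive.

Import Order.TTheory GRing.Theory Num.Theory.

Local Open Scope classical_set_scope.
Local Open Scope ring_scope.

Lemma exP_asbool (P : nat -> Prop) : (exists n, P n) -> exists n, `[< P n >].
Proof. by case=> n Pn; exists n; apply/asboolP. Qed.

(* the least n with P n (0 if there is none; never used in that case) *)
Definition least_nat (P : nat -> Prop) : nat :=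
  match pselect (exists n, P n) with
  | left h => ex_minn (exP_asbool h)
  | right _ => 0%N
  end.

Section GrowthTypes.
Variable R : realType.

Definition in_calO (a : nat -> R) : Prop :=
  (forall n, 0 <= a n) /\ (forall n, a n <= a n.+1).

Definition leO (a b : nat -> R) : Prop :=
  exists2 C : R, 0 < C & forall n, a n <= C * b n.

Definition BJP (a : nat -> R) : Prop :=
  in_calO a /\ exists2 C : R, 0 < C & forall n, a n.+1 <= C * a n.

Definition upperO (S : set (nat -> R)) : set (nat -> R) :=
  [set b | in_calO b /\ forall a, S a -> leO a b].
Definition lowerO (T : set (nat -> R)) : set (nat -> R) :=
  [set a | in_calO a /\ forall b, T b -> leO a b].

(* Elements of the Dedekind-MacNeille completion of O are the cuts
   A = lowerO (upperO A); the supremum in it of a subset S of O is the cut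
   lowerO (upperO S). *)
Definition supDM (S : set (nat -> R)) : set (nat -> R) := lowerO (upperO S).

Definition in_Bbar (x : set (nat -> R)) : Prop :=
  exists Gamma : set (nat -> R),
    [/\ countable Gamma, Gamma `<=` BJP & supDM Gamma = x].

End GrowthTypes.

Section Dynamics.
Variables (R : realType) (M : metricType R).

Definition homeomorphism (f : M -> M) : Prop :=
  continuous f /\ exists g : M -> M, [/\ continuous g, cancel f g & cancel g f].

Definition itin_set (f : M -> M) (k : nat) (U : 'I_k -> set M) (n : nat)
    (t : {ffun 'I_n.+1 -> 'I_k}) : set M :=
  [set x | forall j : 'I_n.+1, U (t j) (iter j f x)].

(* a_{f,U}(n) : minimal cardinality of a subcovering of U^n
   (members of U^n indexed by the words t with nonempty itin_set) *)
Definition a_cov (f : M -> M) (k : nat) (U : 'I_k -> set M) (n : nat) : nat :=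
  least_nat (fun m => exists S : {set {ffun 'I_n.+1 -> 'I_k}},
    [/\ (forall t, t \in S -> itin_set f U t !=set0),
        (forall x, exists2 t, t \in S & itin_set f U t x)
      & #|S| = m]).

Definition bowen_ball (f : M -> M) (eps : R) (n : nat) (x : M) : set M :=
  [set y | forall j : nat, (j < n)%N -> mdist (iter j f x) (iter j f y) < eps].

Definition g_span (f : M -> M) (eps : R) (n : nat) : nat :=
  least_nat (fun m => exists G : seq M,
    [/\ uniq G, (forall y, exists2 x, x \in G & bowen_ball f eps n x y)
      & size G = m]).

Definition o_ent (f : M -> M) : set (nat -> R) :=
  supDM [set b | exists2 eps : R, 0 < eps & b = (fun n => (g_span f eps n)%:R)].

End Dynamics.

From HB Require Import structures.
From mathcomp Require Import all_boot all_order all_algebra.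
From mathcomp Require Import all_classical all_reals all_analysis.
From mathcomp Require Import lra.
Set Implicit Arguments.
Unset Strict Implicit.
Unset Printing Implicit Defensive.
Import Order.TTheory GRing.Theory Num.Theory.
Local Open Scope classical_set_scope.
Local Open Scope ring_scope.

(* (1) is purely combinatorial and holds for any covering U of size k and any map:
   a_{f,U} is non-decreasing (truncating words of a subcover of U^{n+1} gives a
   subcover of U^n) and a_{f,U}(n+1) <= k a_{f,U}(n) (extend each word of a
   subcover of U^n by one letter).
   (2) compares coverings with spanning sets.  If U consists of r-balls around a
   finite r-net and 2r <= eps, picking one point in each member of a minimal
   subcover of U^n gives an eps-spanning set, so g_eps <= a_U.  Conversely, the
   itineraries of an (n+1)-step rho-spanning set through a rho-net yield a
   subcover of U^n for the 2rho-balls, so a_U(n) <= k g_rho(n).  Taking the nets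
   of radius 1/(m+1) given by compactness, the countable family of the a_U is
   cofinal with {g_eps} in both directions, hence has the same supremum. *)

Lemma least_natP (P : nat -> Prop) : (exists n, P n) ->
  P (least_nat P) /\ forall n, P n -> (least_nat P <= n)%N.
Proof.
move=> exP; rewrite /least_nat; case: pselect => // exP'.
case: ex_minnP => m /asboolP Pm m_min; split => // n Pn; apply: m_min.
exact/asboolP.
Qed.

Section ItineraryCovers.
Variables (R : realType) (M : metricType R) (f : M -> M).
Variables (k : nat) (U : 'I_k -> set M).
Hypothesis U_cover : forall x : M, exists i, U i x.

Definition itin_subcover (n m : nat) : Prop :=
  exists S : {set {ffun 'I_n.+1 -> 'I_k}},
    [/\ (forall t, t \in S -> itin_set f U t !=set0),
        (forall x, exists2 t, t \in S & itin_set f U t x)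
      & #|S| = m].

Definition cover_index (x : M) : 'I_k := projT1 (cid (U_cover x)).

Lemma cover_indexP x : U (cover_index x) x.
Proof. exact: projT2 (cid (U_cover x)). Qed.

Definition itinerary (n : nat) (x : M) : {ffun 'I_n.+1 -> 'I_k} :=
  [ffun j : 'I_n.+1 => cover_index (iter j f x)].

Lemma itineraryP n x : itin_set f U (itinerary n x) x.
Proof. by move=> j; rewrite ffunE; exact: cover_indexP. Qed.

Definition realized (n : nat) : {set {ffun 'I_n.+1 -> 'I_k}} :=
  [set t | `[< itin_set f U t !=set0 >]].

Lemma realized_subcover n : itin_subcover n #|realized n|.
Proof.
exists (realized n); split => //.
- by move=> t; rewrite inE => /asboolP.
- move=> x; exists (itinerary n x); last exact: itineraryP.
  by rewrite inE; apply/asboolP; exists x; exact: itineraryP.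
Qed.

Lemma a_covP n :
  itin_subcover n (a_cov f U n) /\ forall m, itin_subcover n m -> (a_cov f U n <= m)%N.
Proof. exact: least_natP (ex_intro _ _ (realized_subcover n)). Qed.

Lemma a_cov_le n (S : {set {ffun 'I_n.+1 -> 'I_k}}) :
  (forall t, t \in S -> itin_set f U t !=set0) ->
  (forall x, exists2 t, t \in S & itin_set f U t x) -> (a_cov f U n <= #|S|)%N.
Proof. by move=> S_ne S_cov; apply: (a_covP n).2; exists S. Qed.

Lemma a_cov_le_realized n : (a_cov f U n <= #|realized n|)%N.
Proof. exact: (a_covP n).2 (realized_subcover n). Qed.

(* Truncating the words of a subcover of U^{n+1} gives a subcover of U^n. *)
Lemma a_cov_mono n : (a_cov f U n <= a_cov f U n.+1)%N.
Proof.
have [[S [S_ne S_cov <-]] _] := a_covP n.+1.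
pose trunc (t : {ffun 'I_n.+2 -> 'I_k}) : {ffun 'I_n.+1 -> 'I_k} :=
  [ffun j => t (widen_ord (leqnSn _) j)].
have trunc_itin t : itin_set f U t `<=` itin_set f U (trunc t).
  by move=> x t_x j; rewrite ffunE; exact: t_x.
apply: leq_trans (a_cov_le (S := trunc @: S) _ _) (leq_imset_card _ _).
- by move=> _ /imsetP[t tS ->]; have [x t_x] := S_ne _ tS; exists x; exact: trunc_itin.
- move=> x; have [t tS t_x] := S_cov x.
  by exists (trunc t); [exact: imset_f | exact: trunc_itin].
Qed.

(* Extending the words of a subcover of U^n by one letter (in every realized
   way) gives a subcover of U^{n+1} with at most k times as many members. *)
Lemma a_cov_jump n : (a_cov f U n.+1 <= a_cov f U n * k)%N.
Proof.
have [[S [_ S_cov <-]] _] := a_covP n.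
pose ext (p : {ffun 'I_n.+1 -> 'I_k} * 'I_k) : {ffun 'I_n.+2 -> 'I_k} :=
  [ffun j : 'I_n.+2 => if (j < n.+1)%N then p.1 (inord j) else p.2].
pose Q := [set p | (p.1 \in S) && `[< itin_set f U (ext p) !=set0 >]].
apply: leq_trans (a_cov_le (S := ext @: Q) _ _) _.
- by move=> t /imsetP[p]; rewrite inE => /andP[_ /asboolP ?] ->.
- move=> x; have [t tS t_x] := S_cov x.
  pose p := (t, cover_index (iter n.+1 f x)).
  have p_x : itin_set f U (ext p) x.
    move=> j; rewrite ffunE /=; case: ifP => jn.
      by have := t_x (inord j); rewrite inordK.
    have -> : (j : nat) = n.+1 by apply/eqP; rewrite eqn_leq -ltnS ltn_ord leqNgt jn.
    exact: cover_indexP.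
  exists (ext p) => //; apply: imset_f; rewrite inE; apply/andP; split=> //.
  by apply/asboolP; exists x.
- apply: leq_trans (leq_imset_card _ _) _.
  rewrite -[k in (_ * k)%N]card_ord -cardsT -cardsX.
  by apply: subset_leq_card; apply/fintype.subsetP => p; rewrite !inE => /andP[-> _].
Qed.

(* a_{f,U}(0) <= k m as soon as m > 0 whenever M is inhabited
   (if M is empty, U^0 is empty). *)
Lemma a_cov0_le m : (M -> (0 < m)%N) -> (a_cov f U 0 <= k * m)%N.
Proof.
move=> m_pos; apply: leq_trans (a_cov_le_realized 0) _.
case: m m_pos => [M0|m _].
  rewrite muln0 leqn0 cards_eq0; apply/eqP/setP => t; rewrite !inE.
  by apply/asboolP => -[x _]; have := M0 x.
apply: leq_trans (max_card _) _.
by rewrite card_ffun !card_ord expn1 leq_pmulr.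
Qed.

Lemma BJP_a_cov : BJP (fun n => (a_cov f U n)%:R : R).
Proof.
split; first by split => n; rewrite ?ler0n // ler_nat a_cov_mono.
exists k.+1%:R => // n; rewrite -natrM ler_nat mulnC.
exact: leq_trans (a_cov_jump n) (leq_mul _ _).
Qed.

End ItineraryCovers.

Section GrowthOrder.
Variable R : realType.

Lemma leO_trans (a b c : nat -> R) : leO a b -> leO b c -> leO a c.
Proof.
move=> [C1 C1_gt0 ab] [C2 C2_gt0 bc]; exists (C1 * C2); first exact: mulr_gt0.
move=> n; apply: le_trans (ab n) _; rewrite -mulrA ler_wpM2l //; exact: ltW.
Qed.

Lemma le_leO (a b : nat -> R) : (forall n, a n <= b n) -> leO a b.
Proof. by move=> ab; exists 1 => // n; rewrite mul1r. Qed.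

(* Two mutually cofinal families have the same upper bounds, hence the same
   supremum in the Dedekind-MacNeille completion. *)
Lemma supDM_cofinal (S T : set (nat -> R)) :
  (forall a, S a -> exists2 b, T b & leO a b) ->
  (forall b, T b -> exists2 a, S a & leO b a) -> supDM S = supDM T.
Proof.
suff upper_sub (A B : set (nat -> R)) :
    (forall a, A a -> exists2 b, B b & leO a b) -> upperO B `<=` upperO A.
  move=> ST TS; rewrite /supDM (_ : upperO S = upperO T) //.
  by apply/seteqP; split; exact: upper_sub.
move=> AB c [c_O c_ub]; split => // a /AB[b /c_ub bc ab]; exact: leO_trans ab bc.
Qed.

End GrowthOrder.

(* A metric space viewed as a pointed topological space, to use the open-cover
   characterization of compactness. *)
Section PointedCopy.
Variables (R : realType) (M : metricType R).

Definition pointed_at (x0 : M) : Type := M.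

Variable x0 : M.
HB.instance Definition _ := Topological.copy (pointed_at x0) M.
HB.instance Definition _ := isPointed.Build (pointed_at x0) x0.

Lemma compact_cover_compact : compact [set: M] -> cover_compact [set: pointed_at x0].
Proof. by move=> M_cpt; rewrite -compact_cover. Qed.

End PointedCopy.

Section Spanning.
Variables (R : realType) (M : metricType R) (f : M -> M).

Definition mballs (k : nat) (z : 'I_k -> M) (r : R) : 'I_k -> set M :=
  fun i => [set y | mdist (z i) y < r].

Lemma finite_net : compact [set: M] -> forall r : R, 0 < r ->
  exists k (z : 'I_k -> M), forall x, exists i, mballs z r i x.
Proof.
move=> M_cpt r r_gt0.
have [[x0 _]|M0] := pselect (exists x : M, True); last first.
  by exists 0%N, (fun i : 'I_0 => False_rect M (ltac:(by case: i))) => x; case: M0; exists x.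
pose F (x : M) : set (pointed_at x0) := @interior M (ball x r).
have [D _ D_cov] : finite_subset_cover [set: M] F [set: pointed_at x0].
  apply: (compact_cover_compact M_cpt) => [x _|x _]; first exact: (@open_interior M).
  by exists x => //; exact: (open_nbhs_ball x (PosNum r_gt0)).2.
pose s : seq M := finmap.enum_fset D.
exists (size s), (fun i => tnth (in_tuple s) i) => x.
have [y yD y_x] := D_cov x I.
have ys : y \in s by [].
have y_idx : (index y s < size s)%N by rewrite index_mem.
exists (Ordinal y_idx).
rewrite /mballs /= (tnth_nth y) /= nth_index //.
by have := interior_subset y_x; rewrite ballEmdist.
Qed.

Lemma mballs_cover_le k (z : 'I_k -> M) (r r' : R) : r <= r' ->
  (forall x, exists i, mballs z r i x) -> forall x, exists i, mballs z r' i x.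
Proof. by move=> rr' z_cov x; have [i zi] := z_cov x; exists i; apply: lt_le_trans rr'. Qed.

Lemma mballs_diam k (z : 'I_k -> M) r i a b :
  mballs z r i a -> mballs z r i b -> mdist a b < r + r.
Proof.
move=> za zb; apply: le_lt_trans (metric_triangle a (z i) b) _.
by rewrite metric_sym; exact: ltrD.
Qed.

Lemma mballs_grow k (z : 'I_k -> M) r s i a b :
  mballs z r i a -> mdist a b < s -> mballs z (r + s) i b.
Proof. by move=> za ab; apply: le_lt_trans (metric_triangle _ a _) _; exact: ltrD. Qed.

Definition spanning (eps : R) (n : nat) (G : seq M) : Prop :=
  forall y, exists2 x, x \in G & bowen_ball f eps n x y.

Lemma undup_spanning eps n G : spanning eps n G -> spanning eps n (undup G).
Proof. by move=> G_span y; have [x xG xy] := G_span y; exists x; rewrite ?mem_undup. Qed.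

Lemma g_spanP eps n G : spanning eps n G ->
  (forall G', spanning eps n G' -> (g_span f eps n <= size G')%N) /\
  exists2 G' : seq M, spanning eps n G' & size G' = g_span f eps n.
Proof.
move=> G_span.
have span_ex : exists m, exists G' : seq M,
    [/\ uniq G', spanning eps n G' & size G' = m].
  by exists (size (undup G)), (undup G); split; [exact: undup_uniq | exact: undup_spanning |].
have [[G' [_ G'_span G'_size]] g_min] := least_natP span_ex.
split=> [H H_span|]; last by exists G'.
apply: leq_trans (size_undup H); apply: g_min; exists (undup H).
by split; [exact: undup_uniq | exact: undup_spanning |].
Qed.

(* One point in each member of a minimal subcover of U^n, for U the r-balls
   with 2r <= eps, gives an (n, eps)-spanning set of size at most a_{f,U}(n). *)
Lemma spanning_of_subcover k (z : 'I_k -> M) (r eps : R) n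
    (z_cov : forall x, exists i, mballs z r i x) : r + r <= eps ->
  exists2 G, spanning eps n G & (size G <= a_cov f (mballs z r) n)%N.
Proof.
move=> r_eps; have [[S [S_ne S_cov <-]] _] := a_covP f z_cov n.
have [[x0 _]|M0] := pselect (exists x : M, True); last first.
  by exists [::] => // y; case: M0; exists y.
have pick_point t : exists x, t \in S -> itin_set f (mballs z r) t x.
  by case: (boolP (t \in S)) => [/S_ne[x t_x]|_]; [exists x | exists x0].
have [pt ptP] := choice pick_point.
exists [seq pt t | t <- enum S]; last by rewrite size_map cardE.
move=> y; have [t tS t_y] := S_cov y.
exists (pt t); first by apply: map_f; rewrite mem_enum.
move=> j jn; pose j' : 'I_n.+1 := Ordinal (leqW jn).
exact: lt_le_trans (mballs_diam (ptP t tS j') (t_y j')) r_eps.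
Qed.

Lemma g_span_le_a_cov k (z : 'I_k -> M) (r eps : R) n
    (z_cov : forall x, exists i, mballs z r i x) : r + r <= eps ->
  (g_span f eps n <= a_cov f (mballs z r) n)%N.
Proof.
move=> r_eps; have [G G_span G_size] := spanning_of_subcover n z_cov r_eps.
exact: leq_trans ((g_spanP G_span).1 G G_span) G_size.
Qed.

Lemma spanning_exists eps n : compact [set: M] -> 0 < eps ->
  exists G, spanning eps n G.
Proof.
move=> M_cpt eps_gt0.
have [k [z z_cov]] := finite_net M_cpt (divr_gt0 eps_gt0 (ltr0Sn _ 1)).
have [G G_span _] := spanning_of_subcover n z_cov
  (ltac:(by rewrite -splitr) : eps / 2 + eps / 2 <= eps).
by exists G.
Qed.

(* The itineraries through a rho-net of the points of an (n+1, rho)-spanning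
   set form a subcover of U^n for the 2rho-balls U. *)
Lemma a_cov_le_span k (z : 'I_k -> M) (rho : R) n G
    (z_cov : forall x, exists i, mballs z rho i x) : 0 < rho ->
  spanning rho n.+1 G -> (a_cov f (mballs z (rho + rho)) n <= size G)%N.
Proof.
move=> rho_gt0 G_span; pose w := itinerary f z_cov n.
have z2_cov := mballs_cover_le (ler_wpDl (ltW rho_gt0) (lexx rho)) z_cov.
apply: leq_trans (a_cov_le z2_cov (S := [set t in map w G]) _ _) _.
- move=> t; rewrite inE => /mapP[x _ ->]; exists x => j; rewrite ffunE.
  by apply: mballs_grow (cover_indexP z_cov _) _; rewrite mdistxx.
- move=> y; have [x xG xy] := G_span y; exists (w x); first by rewrite inE map_f.
  move=> j; rewrite ffunE; exact: mballs_grow (cover_indexP z_cov _) (xy j (ltn_ord j)).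
- by rewrite cardsE; apply: leq_trans (card_size _) _; rewrite size_map.
Qed.

(* a_{f,U} <= k g_{f,rho} for U the 2rho-balls around a rho-net of size k:
   combine [a_cov_le_span] at n+1 with the jump bound, and [a_cov0_le] at 0. *)
Lemma a_cov_le_g_span k (z : 'I_k -> M) (rho : R) n
    (z_cov : forall x, exists i, mballs z rho i x) :
  compact [set: M] -> 0 < rho ->
  (a_cov f (mballs z (rho + rho)) n <= k * g_span f rho n)%N.
Proof.
move=> M_cpt rho_gt0.
have z2_cov := mballs_cover_le (ler_wpDl (ltW rho_gt0) (lexx rho)) z_cov.
have [G G_span] := spanning_exists n M_cpt rho_gt0.
have [_ [G' G'_span G'_size]] := g_spanP G_span.
case: n G G_span G' G'_span G'_size => [|n] _ _ G G_span <-.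
  apply: (a_cov0_le f z2_cov) => x.
  by have [y + _] := G_span x; case: G {G_span}.
apply: leq_trans (a_cov_jump f z2_cov n) _; rewrite mulnC leq_mul2l.
by rewrite (a_cov_le_span z_cov rho_gt0 G_span) orbT.
Qed.

End Spanning.

Section Entropy.
Variables (R : realType) (M : metricType R) (f : M -> M).
Hypothesis M_cpt : compact [set: M].

Definition radius (m : nat) : R := m.+1%:R^-1.

Lemma radius_gt0 m : 0 < radius m.
Proof. by rewrite invr_gt0 ltr0Sn. Qed.

Lemma net_sequence : exists (K : nat -> nat) (z : forall m, 'I_(K m) -> M),
  forall m x, exists i, mballs (z m) (radius m) i x.
Proof.
have net m : exists p : {k : nat & 'I_k -> M},
    forall x, exists i, mballs (projT2 p) (radius m) i x.
  by have [k [z z_cov]] := finite_net M_cpt (radius_gt0 m); exists (existT _ k z).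
have [nets nets_cov] := choice net.
by exists (fun m => projT1 (nets m)), (fun m => projT2 (nets m)).
Qed.

(* Part (2): o(f) is the supremum of the BJP growths a_{f,U_m}, where U_m are
   the 2/(m+1)-balls around the m-th net. *)
Lemma o_ent_in_Bbar : in_Bbar (o_ent f).
Proof.
have [K [z z_cov]] := net_sequence.
pose rho2 m := radius m + radius m.
pose a m n : R := (a_cov f (mballs (z m) (rho2 m)) n)%:R.
have z2_cov m : forall x, exists i, mballs (z m) (rho2 m) i x.
  exact: mballs_cover_le (ler_wpDl (ltW (radius_gt0 m)) (lexx _)) (z_cov m).
exists (range a); split.
- exact: card_le_trans (card_image_le _ _) (countableP _).
- by move=> _ [m _ <-]; exact: BJP_a_cov (z2_cov m).
apply: supDM_cofinal => [_ [m _ <-]|_ [eps eps_gt0 ->]].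
  exists (fun n => (g_span f (radius m) n)%:R); first by exists (radius m); rewrite ?radius_gt0.
  exists (K m).+1%:R => // n; rewrite -natrM ler_nat.
  exact: leq_trans (a_cov_le_g_span f n (z_cov m) M_cpt (radius_gt0 m)) (leq_mul _ _).
have [m] := ltr_add_invr (divr_gt0 eps_gt0 (ltr0Sn _ 3)); rewrite add0r => m_small.
exists (a m); first by exists m.
apply: le_leO => n; rewrite ler_nat; apply: (g_span_le_a_cov f n (z2_cov m)).
by rewrite /rho2 -/(radius m) in m_small *; lra.
Qed.

End Entropy.

Theorem proposition2p4 (R : realType) (M : metricType R) (f : M -> M) :
  compact [set: M] -> homeomorphism f ->
  (forall (k : nat) (U : 'I_k -> set M),
      (forall i, open (U i)) -> (forall x : M, exists i, U i x) ->
      BJP (fun n => (a_cov f U n)%:R : R))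
  /\ in_Bbar (o_ent f).
Proof.
move=> M_cpt _; split; first by move=> k U _ U_cov; exact: BJP_a_cov.
exact: o_ent_in_Bbar.
Qed.
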